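(* For $\mathbf{x}=(x_1,\dots,x_N)^{\mathrm T}\in\mathbb{R}^N$ define $$\ell_{\mathrm{ter}}(\mathbf{x})=\Big(\sum_{n=1}^N x_n^2\Big)\Big(\sum_{n=1}^N x_n^6\Big)-\Big(\sum_{n=1}^N x_n^4\Big)^2.$$ Then $\ell_{\mathrm{ter}}(\mathbf{x})\ge0$ for all $\mathbf{x}$, and $\ell_{\mathrm{ter}}(\mathbf{x})=0$ if and only if $\mathbf{x}\in\{-\alpha,0,+\alpha\}^N$ for some $\alpha\in\mathbb{R}$. Furthermore, $\ell_{\mathrm{ter}}$ has no spurious stationary points: $\nabla\ell_{\mathrm{ter}}(\mathbf{x})=\mathbf{0}$ holds only if $\mathbf{x}\in\{-\alpha,0,+\alpha\}^N$ for some $\alpha\in\mathbb{R}$.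
   Context: A spurious stationary point of a differentiable function $\ell$ whose zero set is $\mathcal{X}$ is a point $\mathbf{x}\notin\mathcal{X}$ with $\nabla\ell(\mathbf{x})=\mathbf{0}$. *)

From HB Require Import structures.
From mathcomp Require Import all_boot all_order all_algebra.
From mathcomp Require Import all_classical all_reals all_analysis.
Set Implicit Arguments. Unset Strict Implicit. Unset Printing Implicit Defensive.
Import Order.TTheory GRing.Theory Num.Theory.
Import numFieldNormedType.Exports.
Local Open Scope ring_scope.

Definition ell_ter (R : realType) (N : nat) (x : 'rV[R]_N) : R :=
  (\sum_(n < N) x ord0 n ^+ 2) * (\sum_(n < N) x ord0 n ^+ 6)
  - (\sum_(n < N) x ord0 n ^+ 4) ^+ 2.

Definition ternary (R : realType) (N : nat) (x : 'rV[R]_N) : Prop :=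
  exists a : R, forall n : 'I_N, x ord0 n = - a \/ x ord0 n = 0 \/ x ord0 n = a.

Definition grad (R : realType) (N : nat) (f : 'rV[R]_N -> R) (x : 'rV[R]_N)
  : 'rV[R]_N :=
  \row_(i < N) ('D_(delta_mx ord0 i) f x).

From HB Require Import structures.
From mathcomp Require Import all_boot all_order all_algebra.
From mathcomp Require Import all_classical all_reals all_analysis.
From mathcomp Require Import ring.
Import Order.TTheory GRing.Theory Num.Theory.
Import numFieldNormedType.Exports.
Local Open Scope ring_scope.

(* Doubling [ell_ter] gives the Lagrange-type sum of squares
   [\sum_(i, j) (x_i x_j (x_i^2 - x_j^2))^2], so [ell_ter] is nonnegative and
   vanishes exactly when any two nonzero coordinates agree up to sign.
   As [ell_ter] is homogeneous of degree 8, Euler's identity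
   [\sum_i x_i d_i ell_ter = 8 ell_ter] turns every stationary point into a
   zero, so there are no spurious ones. *)

Lemma ternary_pairwiseP {R : idomainType} {I : Type} (f : I -> R) :
  (forall i j, f i * f j * (f i ^+ 2 - f j ^+ 2) = 0) <->
  exists a, forall i, f i = - a \/ f i = 0 \/ f i = a.
Proof.
split=> [f_pair | [a fa] i j]; last first.
  by case: (fa i) => [|[|]] ->; case: (fa j) => [|[|]] ->; ring.
have [[k fk_neq0]|f_eq0] := pselect (exists k, f k != 0); last first.
  by exists 0 => i; right; left; apply/eqP/negPn/negP => fi; apply: f_eq0; exists i.
exists (f k) => i; move/eqP: (f_pair i k).
rewrite !mulf_eq0 (negbTE fk_neq0) orbF subr_eq0 eqf_sqr.
by case/orP=> [|/orP[]] /eqP ->; tauto.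
Qed.

Lemma is_derive_coord {R : realFieldType} {m n : nat} (A v : 'M[R]_(m, n)) i j :
  is_derive A v (fun B : 'M[R]_(m, n) => B i j) (v i j).
Proof.
have D_id := @derivable_id R _ A v.
apply: DeriveDef; first exact: (derivable_mxP id A v).1 D_id i j.
by have := derive_mx D_id; rewrite derive_id => /matrixP/(_ i j); rewrite mxE.
Qed.

Section power_sums.
Context {R : realFieldType} {N : nat}.
Implicit Types x v : 'rV[R]_N.

Definition psum k x := \sum_(n < N) x ord0 n ^+ k.

Lemma is_derive_psum k x v :
  is_derive x v (psum k) (\sum_(n < N) k%:R * x ord0 n ^+ k.-1 * v ord0 n).
Proof.
have := is_derive_sum (fun n => is_deriveX k (is_derive_coord x v ord0 n)).
by rewrite fct_sumE; under eq_fun do under eq_bigr do rewrite exprfctE.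
Qed.

Lemma is_derive_psum_delta k x i :
  is_derive x (delta_mx ord0 i) (psum k) (k%:R * x ord0 i ^+ k.-1).
Proof.
apply: is_derive_eq (is_derive_psum k x _) _.
rewrite (bigD1 i) //= big1 => [|n n_neq_i].
  by rewrite mxE !eqxx mulr1 addr0.
by rewrite mxE (negbTE n_neq_i) mulr0.
Qed.

End power_sums.

Section ell_ter.
Variables (R : realType) (N : nat).
Implicit Types x : 'rV[R]_N.

Lemma ell_terE x : ell_ter x = psum 2 x * psum 6 x - psum 4 x ^+ 2.
Proof. by []. Qed.

Lemma ell_ter_sum_sqr x : ell_ter x *+ 2 =
  \sum_(i < N) \sum_(j < N) (x ord0 i * x ord0 j * (x ord0 i ^+ 2 - x ord0 j ^+ 2)) ^+ 2.
Proof.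
have -> : ell_ter x *+ 2 =
    psum 2 x * psum 6 x + psum 6 x * psum 2 x - (psum 4 x * psum 4 x) *+ 2.
  by rewrite ell_terE; ring.
rewrite /psum !big_distrlr -sumrMnl -big_split /= -sumrB; apply: eq_bigr => i _.
by rewrite -sumrMnl -big_split /= -sumrB; apply: eq_bigr => j _; ring.
Qed.

Lemma ell_ter_ge0 x : 0 <= ell_ter x.
Proof.
rewrite -(pmulrn_lge0 _ (ltn0Sn 1)) ell_ter_sum_sqr.
by apply: sumr_ge0 => i _; apply: sumr_ge0 => j _; exact: sqr_ge0.
Qed.

Lemma ell_ter_eq0 x : ell_ter x = 0 <-> ternary x.
Proof.
rewrite /ternary -ternary_pairwiseP; split=> [x_eq0 i j | x_pair].
  have sum_eq0 : \sum_(i < N) \sum_(j < N)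
      (x ord0 i * x ord0 j * (x ord0 i ^+ 2 - x ord0 j ^+ 2)) ^+ 2 = 0.
    by rewrite -ell_ter_sum_sqr x_eq0 mul0rn.
  have row_eq0 :=
    psumr_eq0P (fun i _ => sumr_ge0 _ (fun j _ => sqr_ge0 _)) sum_eq0 (i := i) isT.
  by apply/eqP; rewrite -sqrf_eq0 (psumr_eq0P (fun j _ => sqr_ge0 _) row_eq0 (i := j) isT).
suff /eqP : ell_ter x *+ 2 = 0 by rewrite mulrn_eq0 => /eqP.
rewrite ell_ter_sum_sqr big1 // => i _.
by rewrite big1 // => j _; rewrite x_pair expr0n.
Qed.

Lemma partial_ell_ter x i : 'D_(delta_mx ord0 i) (@ell_ter R N) x =
  psum 2 x * (6 * x ord0 i ^+ 5) + psum 6 x * (2 * x ord0 i)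
  - 8 * psum 4 x * x ord0 i ^+ 3.
Proof.
have -> : @ell_ter R N = psum 2 * psum 6 - psum 4 ^+ 2 by apply/funext.
have D k := is_derive_psum_delta k x i.
have ? := is_deriveB (is_deriveM (D 2) (D 6)) (is_deriveX 2 (D 4)).
have scaleE (a b : R) : a *: b = a * b by [].
by rewrite derive_val /= !scaleE; ring.
Qed.

Lemma ell_ter_Euler x :
  \sum_(i < N) x ord0 i * 'D_(delta_mx ord0 i) (@ell_ter R N) x = ell_ter x *+ 8.
Proof.
under eq_bigr => i _ do rewrite partial_ell_ter.
have term i : x ord0 i * (psum 2 x * (6 * x ord0 i ^+ 5) + psum 6 x * (2 * x ord0 i)
      - 8 * psum 4 x * x ord0 i ^+ 3) =
    psum 2 x * 6 * x ord0 i ^+ 6 + psum 6 x * 2 * x ord0 i ^+ 2 - psum 4 x * 8 * x ord0 i ^+ 4.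
  by ring.
rewrite (eq_bigr _ (fun i _ => term i)) sumrB big_split /= -!mulr_sumr ell_terE /psum.
ring.
Qed.

Lemma grad_ell_ter_eq0 x : grad (@ell_ter R N) x = 0 -> ell_ter x = 0.
Proof.
move=> /matrixP grad0; suff /eqP : ell_ter x *+ 8 = 0 by rewrite mulrn_eq0 => /eqP.
rewrite -ell_ter_Euler big1 // => i _.
by have := grad0 ord0 i; rewrite !mxE => ->; rewrite mulr0.
Qed.

End ell_ter.

Theorem mainTheorem5 (R : realType) (N : nat) :
  (forall x : 'rV[R]_N, 0 <= ell_ter x) /\
  (forall x : 'rV[R]_N, ell_ter x = 0 <-> ternary x) /\
  (forall x : 'rV[R]_N, grad (@ell_ter R N) x = 0 -> ternary x).
Proof.
split; first exact: ell_ter_ge0.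
split; first exact: ell_ter_eq0.
by move=> x /grad_ell_ter_eq0 /ell_ter_eq0.
Qed.
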